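(* Let $m\geq 3$ and $n\geq 2$ be integers with $m\leq n$, let $K_m$ and $K_n$ be the complete graphs of orders $m$ and $n$. Then $rvcl(K_m\diamond K_n)=n+1$ if $n\geq |E(K_m)|-1$, and $rvcl(K_m\diamond K_n)=n+2$ if $n<|E(K_m)|-1$, where $|E(K_m)|=m(m-1)/2$.
   Context: All graphs are finite, simple, connected and undirected; $d$ denotes graph distance. A rainbow vertex $k$-coloring of $G$ is a map $c:V(G)\to\{1,\dots,k\}$ such that every two vertices are joined by a path whose internal vertices all receive distinct colors. For such $c$ let $R_i=c^{-1}(i)$; the rainbow code of $v$ is $(d(v,R_1),\dots,d(v,R_k))$ with $d(v,R_i)=\min_{x\in R_i}d(v,x)$. A locating rainbow $k$-coloring is a rainbow vertex $k$-coloring in which distinct vertices have distinct rainbow codes; $rvcl(G)$ is the least $k$ for which one exists. For graphs $G_m$ (order $m$) and $H_n$ (order $n$) on disjoint vertex sets, the edge corona $G_m\diamond H_n$ is obtained from one copy of $G_m$ and $|E(G_m)|$ vertex-disjoint copies of $H_n$, one per edge of $G_m$, by joining both end vertices of the $j$-th edge of $G_m$ to every vertex of the $j$-th copy of $H_n$. *)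

From mathcomp Require Import all_boot.
Set Implicit Arguments. Unset Strict Implicit. Unset Printing Implicit Defensive.

Section Graphs.
Variable T : finType.
Variable e : rel T.

(* walk x0 = u, x1, ..., xk = v of length k = size p, p = [x1;...;xk] *)
Definition walk_of_len (u v : T) (k : nat) : bool :=
  [exists p : k.-tuple T, path e u p && (last u p == v)].

(* graph distance: least length of a u-v walk (for connected graphs
   such a walk of length < #|T| always exists) *)
Definition dist (u v : T) : nat :=
  find (fun k => walk_of_len u v k) (iota 0 #|T|).

(* d(v, S) = min_{x in S} d(v, x); None encodes +infinity (S empty) *)
Definition dist_set (v : T) (S : {set T}) : option nat :=
  if [pick x in S] is Some _ then
    Some (\big[minn/#|T|]_(x in S) dist v x)
  else None.

Definition rainbow_vertex_coloring (k : nat) (c : T -> 'I_k) : Prop :=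
  forall u v : T, u != v ->
    exists p : seq T,
      [&& path e u p, last u p == v, uniq (u :: p)
        & uniq (map c (behead (belast u p)))].

Definition color_class (k : nat) (c : T -> 'I_k) (i : 'I_k) : {set T} :=
  [set x | c x == i].

Definition rainbow_code (k : nat) (c : T -> 'I_k) (v : T)
  : {ffun 'I_k -> option nat} :=
  [ffun i => dist_set v (color_class c i)].

Definition locating_rainbow_coloring (k : nat) (c : T -> 'I_k) : Prop :=
  rainbow_vertex_coloring c /\ injective (rainbow_code c).

Definition rvcl_eq (k : nat) : Prop :=
  (exists c : T -> 'I_k, locating_rainbow_coloring c) /\
  (forall k', k' < k -> ~ exists c : T -> 'I_k', locating_rainbow_coloring c).

End Graphs.

Definition KEdge (m : nat) := {p : 'I_m * 'I_m | p.1 < p.2}.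

Definition corona_vertex (m n : nat) : finType :=
  ('I_m + (KEdge m * 'I_n))%type.

Definition corona_adj (m n : nat) : rel (corona_vertex m n) :=
  fun x y =>
    match x, y with
    | inl a, inl b => a != b
    | inl a, inr (ed, _) => (a == (val ed).1) || (a == (val ed).2)
    | inr (ed, _), inl a => (a == (val ed).1) || (a == (val ed).2)
    | inr (ed, i), inr (ed', j) => (ed == ed') && (i != j)
    end.

From HB Require Import structures.
From mathcomp Require Import all_boot zify.
Set Implicit Arguments. Unset Strict Implicit. Unset Printing Implicit Defensive.

(* An edge g of K_m, its two ends and the copy of K_n on it form a clique of n + 2 vertices.
   In a locating colouring the copy vertices are twins, so they get distinct colours, and if
   every colour occurs in such a clique, all its vertices get distinct colours; hence at least
   n + 1 colours are needed, and with exactly n + 1 colours every clique misses a colour.  If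
   K_m has more than n + 1 edges, two copies miss the same colour z; their vertices are then
   separated only by the distance to z, and a case analysis on where z occurs produces two such
   copies at the same distance, so two equally coloured copy vertices share their code.
   Conversely, n + 1 colours suffice when there are at most n + 1 edges (one colour per edge),
   and for m >= 4 so do n + 2 colours (one colour per vertex of K_m, each copy avoiding the
   colours of a rotated image of its edge). *)

(* For [bigD1] on the [\big[minn/#|T|]] of [dist_set]; [minn] has no unit in [nat]. *)
HB.instance Definition _ := SemiGroup.isComLaw.Build nat minn minnA minnC.

Section Distance.
Variables (T : finType) (e : rel T).
Implicit Types (u v w : T).

Lemma walk_of_lenP u v k :
  reflect (exists p : seq T, [/\ size p = k, path e u p & last u p = v])
          (walk_of_len e u v k).
Proof.
apply: (iffP existsP) => [[t /andP[pt /eqP lt]] | [p [sz pp lp]]].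
  by exists (val t); rewrite size_tuple.
have sz' : size p == k by rewrite sz.
by exists (Tuple sz'); rewrite /= pp lp eqxx.
Qed.

Lemma walk_of_len0 u v : walk_of_len e u v 0 = (u == v).
Proof.
apply/walk_of_lenP/eqP => [[[|x p] [//= _ _ <-]] // | ->].
by exists [::].
Qed.

Lemma walk_of_len1 u v : walk_of_len e u v 1 = e u v.
Proof.
apply/walk_of_lenP/idP => [[[|x [|y p]] [//= _ /andP[uv _] <-]] // | uv].
by exists [:: v]; rewrite /= uv.
Qed.

Lemma dist_le_card u v : dist e u v <= #|T|.
Proof. by rewrite /dist -[leqRHS](size_iota 0) find_size. Qed.

Lemma dist_le u v k : k < #|T| -> walk_of_len e u v k -> dist e u v <= k.
Proof.
move=> kT uvk; rewrite leqNgt; apply/negP => /(before_find 0).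
by rewrite nth_iota // add0n uvk.
Qed.

Lemma dist_ge u v k :
  k <= #|T| -> (forall i, i < k -> ~~ walk_of_len e u v i) -> k <= dist e u v.
Proof.
move=> kT no_walk; rewrite leqNgt; apply/negP => lt_d.
have d_lt : dist e u v < #|T| by apply: leq_trans lt_d kT.
have has_walk : has (walk_of_len e u v) (iota 0 #|T|) by rewrite has_find size_iota.
have := nth_find 0 has_walk; rewrite nth_iota // add0n.
by apply/negP/no_walk.
Qed.

Lemma dist_walk u v : dist e u v < #|T| -> walk_of_len e u v (dist e u v).
Proof.
move=> d_lt; have has_walk : has (walk_of_len e u v) (iota 0 #|T|).
  by rewrite has_find size_iota.
by have := nth_find 0 has_walk; rewrite nth_iota // add0n.
Qed.

Lemma dist_refl u : dist e u u = 0.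
Proof.
apply/eqP; rewrite -leqn0 dist_le ?walk_of_len0 //.
by apply/card_gt0P; exists u.
Qed.

Lemma dist_gt0 u v : u != v -> 0 < dist e u v.
Proof.
move=> uv; apply: dist_ge => [|[|//] _]; last by rewrite walk_of_len0.
by apply/card_gt0P; exists u.
Qed.

Lemma dist_eq0 u v : dist e u v = 0 -> u = v.
Proof. by move=> d0; apply/eqP; apply: contra_eqT d0 => /dist_gt0; rewrite lt0n. Qed.

Lemma dist_eq1 u v : dist e u v = 1 -> e u v.
Proof.
move=> d1; rewrite -walk_of_len1 -d1 dist_walk // d1.
have [|T_le1] := ltnP 1 #|T|; first by [].
have T1 : #|T| = 1 by apply/eqP; rewrite eqn_leq T_le1 -d1 dist_le_card.
by move: d1; rewrite (card_le1_eqP (A := T) _ u v) ?T1 ?dist_refl.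
Qed.

Lemma dist_adj u v : 1 < #|T| -> u != v -> e u v -> dist e u v = 1.
Proof.
move=> T_gt1 uv euv; apply/eqP; rewrite eqn_leq dist_gt0 // andbT.
by rewrite dist_le ?walk_of_len1.
Qed.

Lemma dist_ge2 u v : 1 < #|T| -> u != v -> ~~ e u v -> 2 <= dist e u v.
Proof.
move=> T_gt1 uv not_euv; apply: dist_ge => // -[|[|//]] _.
  by rewrite walk_of_len0.
by rewrite walk_of_len1.
Qed.

Lemma dist_le2 u w v : 2 < #|T| -> e u w -> e w v -> dist e u v <= 2.
Proof.
move=> T_gt2 euw ewv; apply: dist_le => //.
by apply/walk_of_lenP; exists [:: w; v]; rewrite /= euw ewv.
Qed.

(* A shortest walk from [y] either passes through [x] or can start at [x] instead. *)
Lemma twin_dist_le x y w :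
  irreflexive e -> (forall z, z != x -> z != y -> e x z = e y z) ->
  y != w -> dist e x w <= dist e y w.
Proof.
move=> irr twin yw.
have [d_lt|] := ltnP (dist e y w) #|T|; last exact: leq_trans (dist_le_card _ _).
have /walk_of_lenP [[|z p] [sz /= walk lst]] := dist_walk d_lt.
  by move: yw; rewrite -lst eqxx.
case/andP: walk => eyz walk.
have [zx|zx] := eqVneq z x.
  subst z; have x_walk : walk_of_len e x w (size p) by apply/walk_of_lenP; exists p.
  by rewrite -sz ltnW // ltnS dist_le // (leq_trans _ d_lt) // -sz.
have zy : z != y by apply: contraTneq eyz => ->; rewrite irr.
apply: dist_le => //; apply/walk_of_lenP; exists (z :: p).
by split => //=; rewrite twin // eyz.
Qed.

End Distance.

Section DistanceToSet.
Variables (T : finType) (e : rel T).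
Implicit Types (v w : T) (S : {set T}).

Lemma dist_set_none v S : S = set0 -> dist_set e v S = None.
Proof. by move=> ->; rewrite /dist_set; case: pickP => // w; rewrite inE. Qed.

Lemma dist_set_min v S w :
  w \in S -> (forall x, x \in S -> dist e v w <= dist e v x) ->
  dist_set e v S = Some (dist e v w).
Proof.
move=> wS w_min; rewrite /dist_set; case: pickP => [_ _|/(_ w)]; last by rewrite wS.
congr Some; rewrite (bigD1 w) //=; apply/minn_idPl.
apply: (big_ind (leq (dist e v w))) => [|x y|x /andP[xS _]]; last exact: w_min.
- exact: dist_le_card.
- by rewrite leq_min => -> ->.
Qed.

Lemma dist_set_attained v S d :
  dist_set e v S = Some d -> exists2 w, w \in S & dist e v w = d.
Proof.
have [->|[w0 w0S]] := set_0Vmem S; first by rewrite dist_set_none.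
have [w wS w_min] := arg_minnP (dist e v) w0S.
by rewrite (dist_set_min (w := w)) // => -[<-]; exists w.
Qed.

Lemma dist_set_mem v S : v \in S -> dist_set e v S = Some 0.
Proof.
by move=> vS; rewrite (dist_set_min (w := v)) ?dist_refl.
Qed.

Lemma dist_set_adj v w S :
  1 < #|T| -> v \notin S -> w \in S -> e v w -> dist_set e v S = Some 1.
Proof.
move=> T_gt1 vS wS evw; have vw : v != w by apply: contraNneq vS => ->.
rewrite (dist_set_min (w := w)) ?dist_adj // => x xS.
by apply: dist_gt0; apply: contraNneq vS => ->.
Qed.

Lemma dist_set_via v t w S :
  2 < #|T| -> v \notin S -> (forall x, x \in S -> ~~ e v x) ->
  w \in S -> e v t -> e t w -> dist_set e v S = Some 2.
Proof.
move=> T_gt2 vS no_adj wS evt etw.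
have T_gt1 := ltnW T_gt2.
have ge2 x : x \in S -> 2 <= dist e v x.
  by move=> xS; rewrite dist_ge2 ?no_adj //; apply: contraNneq vS => ->.
have vw_le2 := dist_le2 T_gt2 evt etw.
rewrite (dist_set_min (w := w)) => [|//|x /ge2]; last exact: leq_trans vw_le2.
by congr Some; apply/eqP; rewrite eqn_leq vw_le2 ge2.
Qed.

End DistanceToSet.

Section RainbowCodes.
Variables (T : finType) (e : rel T).
Hypothesis T_gt1 : 1 < #|T|.

Definition near (C : eqType) (c : T -> C) (v : T) (z : C) : bool :=
  [exists w, ((w == v) || e v w) && (c w == z)].

Variables (k : nat) (c : T -> 'I_k).

Lemma rainbow_code_color x y :
  rainbow_code e c x = rainbow_code e c y -> c x = c y.
Proof.
move=> codes; have := congr1 (fun f : {ffun _ -> _} => f (c x)) codes.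
rewrite !ffunE dist_set_mem ?inE //.
by move=> /esym /dist_set_attained [w]; rewrite inE => /eqP <- /dist_eq0 ->.
Qed.

Lemma nearE v i :
  near c v i = (rainbow_code e c v i \in [:: Some 0; Some 1]).
Proof.
rewrite ffunE !inE; apply/existsP/orP => [[w /andP[/orP[/eqP-> | evw] cw]]|].
- by left; rewrite dist_set_mem ?inE.
- have [vi|vi] := boolP (v \in color_class c i); first by left; rewrite dist_set_mem.
  by right; rewrite (dist_set_adj T_gt1 vi _ evw) ?inE.
case=> /eqP /dist_set_attained [w]; rewrite inE => cw.
  by move=> /dist_eq0 ->; exists w; rewrite eqxx.
by move=> /dist_eq1 evw; exists w; rewrite evw orbT.
Qed.

Lemma rainbow_code_near x y i :
  rainbow_code e c x = rainbow_code e c y -> near c x i = near c y i.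
Proof. by move=> codes; rewrite !nearE codes. Qed.

Lemma twin_rainbow_code x y :
  irreflexive e -> (forall z, z != x -> z != y -> e x z = e y z) -> c x = c y ->
  rainbow_code e c x = rainbow_code e c y.
Proof.
move=> irr twin cxy; apply/ffunP => i; rewrite !ffunE.
have yi : (y \in color_class c i) = (x \in color_class c i) by rewrite !inE cxy.
have [xi|xi] := boolP (x \in color_class c i); first by rewrite !dist_set_mem ?yi.
move: yi; rewrite (negbTE xi) => /negbT yi.
rewrite /dist_set; case: pickP => // _ _; congr Some; apply: eq_bigr => w wi.
have xw : x != w by apply: contraNneq xi => ->.
have yw : y != w by apply: contraNneq yi => ->.
by apply/eqP; rewrite eqn_leq !twin_dist_le // => z z1 z2; rewrite twin.
Qed.

Section Clique.
Variable Q : pred T.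
Hypothesis Q_clique : forall x y, Q x -> Q y -> x != y -> e x y.
Hypothesis Q_colors : forall i, exists2 w, Q w & c w = i.

Lemma clique_rainbow_code x :
  Q x -> rainbow_code e c x = [ffun i => Some (i != c x : nat)].
Proof.
move=> Qx; apply/ffunP => i; rewrite !ffunE.
have [->|icx] := eqVneq i (c x); first by rewrite dist_set_mem ?inE.
have [w Qw cw] := Q_colors i.
rewrite (dist_set_adj (w := w)) // ?inE 1?eq_sym ?cw //.
by apply: Q_clique => //; apply: contraNneq icx => ->; rewrite cw.
Qed.

Lemma locating_clique_inj x y :
  locating_rainbow_coloring e c -> Q x -> Q y -> c x = c y -> x = y.
Proof.
by move=> [_ code_inj] Qx Qy cxy; apply: code_inj; rewrite !clique_rainbow_code // cxy.
Qed.

End Clique.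

End RainbowCodes.

Notation e1 g := (val g).1.
Notation e2 g := (val g).2.

Section Corona.
Variables m n : nat.
Hypothesis m_gt2 : 2 < m.

Local Notation V := (corona_vertex m n).
Local Notation adj := (@corona_adj m n).

Definition incident (a : 'I_m) (g : KEdge m) : bool := (a == e1 g) || (a == e2 g).

Definition edge_clique (g : KEdge m) : pred V :=
  fun w => match w with inl a => incident a g | inr (h, _) => h == g end.

Definition clique_has (C : eqType) (c : V -> C) g (z : C) : bool :=
  [exists w, edge_clique g w && (c w == z)].

Lemma e1_neq_e2 (g : KEdge m) : e1 g != e2 g.
Proof. by apply: contraTneq (valP g) => ->; rewrite ltnn. Qed.

Lemma corona_adj_irr : irreflexive adj.
Proof. by case=> [a|[g i]] /=; rewrite ?eqxx ?andbF. Qed.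

Lemma card_corona_gt2 : 2 < #|V|.
Proof. by rewrite card_sum card_ord (leq_trans m_gt2) ?leq_addr. Qed.

Lemma card_corona_gt1 : 1 < #|V|.
Proof. exact: ltnW card_corona_gt2. Qed.

Lemma edge_clique_adj g x y : edge_clique g x -> edge_clique g y -> x != y -> adj x y.
Proof.
case: x => [a|[g1 i]]; case: y => [b|[g2 j]] //=.
- by move=> ga /eqP->.
- by move=> /eqP->.
by move=> /eqP-> /eqP->; rewrite eqxx => ij; apply: contraNneq ij => ->.
Qed.

Lemma copy_closed_nbhd g j w :
  (w == inr (g, j)) || adj (inr (g, j)) w = edge_clique g w.
Proof.
case: w => [a|[h i]] //=; rewrite [inr _ == _]/eq_op /= [(h, i) == _]/eq_op /= (eq_sym g).
by case: (h == g); rewrite //= eq_sym orbN.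
Qed.

Lemma near_copy (C : eqType) (c : V -> C) g j z :
  near adj c (inr (g, j)) z = clique_has c g z.
Proof. by apply: eq_existsb => w; rewrite copy_closed_nbhd. Qed.

Lemma clique_hasN (C : eqType) (c : V -> C) g z :
  c (inl (e1 g)) != z -> c (inl (e2 g)) != z -> (forall j, c (inr (g, j)) != z) ->
  ~~ clique_has c g z.
Proof.
move=> c1 c2 cj; apply/existsP => -[[a|[h j]] /= /andP[Qw /eqP cw]].
  by case/orP: Qw => /eqP ae; rewrite -cw ae eqxx in c1 c2.
by move: cw (cj j); rewrite (eqP Qw) => ->; rewrite eqxx.
Qed.

Lemma copy_twins g i j z :
  z != inr (g, i) -> z != inr (g, j) -> adj (inr (g, i)) z = adj (inr (g, j)) z.
Proof.
move=> zi zj; have := copy_closed_nbhd g i z; rewrite -(copy_closed_nbhd g j z).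
by rewrite (negbTE zi) (negbTE zj).
Qed.

Lemma corona_rainbow k (c : V -> 'I_k) :
  (forall a b, c (inl a) = c (inl b) -> a = b) -> rainbow_vertex_coloring adj c.
Proof.
move=> c_inj x y xy; have [xy_adj|not_adj] := boolP (adj x y).
  by exists [:: y]; rewrite /= xy_adj eqxx inE xy.
case: x y xy not_adj => [a|[g i]] [b|[g' j]] xy /=.
- by rewrite negbK => /eqP abE; rewrite abE eqxx in xy.
- rewrite negb_or => /andP[a1 _]; exists [:: inl (e1 g'); inr (g', j)].
  by rewrite /= !inE -!sum_eqE /= !eqxx orbF a1.
- rewrite negb_or eq_sym => /andP[b1 _]; exists [:: inl (e1 g); inl b].
  by rewrite /= !inE -!sum_eqE /= !eqxx b1.
have [gg'|gg'] := eqVneq g g'.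
  by rewrite gg' /= negbK => /eqP ij; rewrite gg' ij eqxx in xy.
move=> _; have [g1E|g1] := eqVneq (e1 g) (e1 g').
  exists [:: inl (e1 g); inr (g', j)].
  by rewrite /= !inE -!sum_eqE /= !eqxx g1E eqxx /= xpair_eqE (negbTE gg').
exists [:: inl (e1 g); inl (e1 g'); inr (g', j)].
rewrite /= !inE -!sum_eqE /= !eqxx xpair_eqE (negbTE gg') orbF g1 !andbT /=.
by apply: contra g1 => /eqP /c_inj ->.
Qed.

Lemma copy_rainbow_code_twins k (c : V -> 'I_k) g i j :
  c (inr (g, i)) = c (inr (g, j)) ->
  rainbow_code adj c (inr (g, i)) = rainbow_code adj c (inr (g, j)).
Proof. by apply: twin_rainbow_code; [exact: corona_adj_irr | exact: copy_twins]. Qed.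

Lemma locating_criterion k (col : V -> nat) :
  (forall x, col x <= k) ->
  (forall a b, col (inl a) = col (inl b) -> a = b) ->
  (forall g i j, col (inr (g, i)) = col (inr (g, j)) -> i = j) ->
  (forall g g', g != g' -> exists j, ~~ clique_has col g' (col (inr (g, j)))) ->
  (forall g, exists z, ~~ clique_has col g z /\ forall a, near adj col (inl a) z) ->
  locating_rainbow_coloring adj (fun x => inord (col x) : 'I_k.+1).
Proof.
move=> col_le col_inl_inj col_copy_inj copies_sep copy_vertex_sep.
set c := fun x => _.
have inordE a b : a <= k -> b <= k -> (inord a == inord b :> 'I_k.+1) = (a == b).
  by move=> ak bk; apply/eqP/eqP => [/(congr1 val)|->]; rewrite //= !inordK.
have c_near x z : z <= k -> near adj c x (inord z) = near adj col x z.
  by move=> zk; apply: eq_existsb => w; rewrite inordE.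
split.
  by apply: corona_rainbow => a b /eqP; rewrite inordE // => /eqP /col_inl_inj.
move=> x y codes.
have /eqP := rainbow_code_color codes; rewrite inordE // => /eqP colxy.
have near_xy z : near adj col x z = near adj col y z.
  have [zk|kz] := leqP z k.
    by rewrite -!c_near // (rainbow_code_near card_corona_gt1 _ codes).
  by apply/existsP/existsP => -[w /andP[_ /eqP colw]]; move: (col_le w); rewrite colw leqNgt kz.
have not_inl_copy a g j : near adj col (inl a) =1 near adj col (inr (g, j)) -> False.
  have [z [/negbTE no_z near_z]] := copy_vertex_sep g.
  by move=> /(_ z); rewrite near_copy no_z near_z.
case: x y codes colxy near_xy => [a|[g i]] [b|[g' j]] codes colxy near_xy.
- by rewrite (col_inl_inj _ _ colxy).
- by case: (not_inl_copy a g' j).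
- by case: (not_inl_copy b g i) => z; rewrite near_xy.
have [gg'|gg'] := eqVneq g g'; first by rewrite gg' in colxy *; rewrite (col_copy_inj _ _ _ colxy).
have [j0 /negbTE no_z] := copies_sep g g' gg'.
move: (near_xy (col (inr (g, j0)))); rewrite !near_copy no_z.
by move=> /existsP[]; exists (inr (g, j0)); rewrite /= !eqxx.
Qed.

Lemma incident_e1 (g : KEdge m) : incident (e1 g) g.
Proof. by rewrite /incident eqxx. Qed.

Lemma incident_e2 (g : KEdge m) : incident (e2 g) g.
Proof. by rewrite /incident eqxx orbT. Qed.

Lemma incident_edge (a b : 'I_m) : a != b -> exists h : KEdge m, incident a h && incident b h.
Proof.
rewrite /incident; case: (ltngtP a b) => [ab|ba|/val_inj->]; last by rewrite eqxx.
- by exists (exist _ (a, b) ab); rewrite !eqxx orbT.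
- by exists (exist _ (b, a) ba); rewrite !eqxx orbT.
Qed.

Lemma incident3 (g : KEdge m) x y w : incident x g -> incident y g -> incident w g ->
  x != y -> x != w -> y != w -> False.
Proof. by rewrite /incident => /orP[]/eqP-> /orP[]/eqP-> /orP[]/eqP->; rewrite ?eqxx. Qed.

Definition edge01 : KEdge m :=
  exist _ (Ordinal (ltnW (ltnW m_gt2)), Ordinal (ltnW m_gt2)) (isT : 0 < 1).

Lemma incident_two_edges v :
  exists h1 h2 : KEdge m, [/\ incident v h1, incident v h2 & h1 != h2].
Proof.
pose o i (im : i < m) := Ordinal im.
pose u1 := if v == 0 :> nat then o 1 (ltnW m_gt2) else o 0 (ltnW (ltnW m_gt2)).
pose u2 := if v == 2 :> nat then o 1 (ltnW m_gt2) else o 2 m_gt2.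
have [vu1 vu2 u12] : [/\ v != u1, v != u2 & u1 != u2].
  by rewrite /u1 /u2 -!(inj_eq val_inj); case: ifP; case: ifP => /=; split; lia.
have [h1 /andP[vh1 u1h1]] := incident_edge vu1.
have [h2 /andP[vh2 u2h2]] := incident_edge vu2.
exists h1, h2; split => //; apply/eqP => h12; subst h2.
exact: incident3 vh1 u1h1 u2h2 vu1 vu2 u12.
Qed.

Section LocatingColoring.
Variables (k : nat) (c : V -> 'I_k).
Hypothesis c_loc : locating_rainbow_coloring adj c.

Lemma copy_color_inj g : injective (fun j => c (inr (g, j))).
Proof.
move=> i j /copy_rainbow_code_twins codes.
by have [_ /(_ _ _ codes) []] := c_loc.
Qed.

(* The clique on an edge and its copy has n + 2 vertices, all with distinct colours. *)
Lemma clique_all_colors_card g : (forall i, clique_has c g i) -> n.+2 <= k.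
Proof.
move=> all_i.
have Q_colors i : exists2 w, edge_clique g w & c w = i.
  by have /existsP[w /andP[Qw /eqP cw]] := all_i i; exists w.
have c_inj := locating_clique_inj card_corona_gt1 (@edge_clique_adj g) Q_colors c_loc.
pose f (o : option (option 'I_n)) : V :=
  if o is Some o' then if o' is Some j then inr (g, j) else inl (e2 g) else inl (e1 g).
have f_clique o : edge_clique g (f o) by case: o => [[j|]|] /=; rewrite /incident ?eqxx ?orbT.
have f_inj : injective f.
  have g12 := e1_neq_e2 g.
  by move=> [[j|]|] [[j'|]|] //= [] => [->|e|e] //; rewrite e eqxx in g12.
have := leq_card (c \o f) (fun o o' eqc => f_inj _ _ (c_inj _ _ (f_clique o) (f_clique o') eqc)).
by rewrite !card_option !card_ord.
Qed.

Lemma locating_colors_gt : n < k.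
Proof.
pose copy j := c (inr (edge01, j)).
have copy_inj : injective copy := @copy_color_inj edge01.
have := leq_card copy copy_inj; rewrite !card_ord leq_eqVlt.
case/orP=> [/eqP n_eq_k|//].
apply: ltnW (@clique_all_colors_card edge01 _) => i.
have /codomP[j ->] : i \in codom copy by apply: inj_card_onto; rewrite ?card_ord ?n_eq_k.
by apply/existsP; exists (inr (edge01, j)); rewrite /= !eqxx.
Qed.

End LocatingColoring.

Section TightColoring.
Hypothesis n_gt0 : 0 < n.
Variable c : V -> 'I_n.+1.
Hypothesis c_loc : locating_rainbow_coloring adj c.

(* The default [ord0] is never used: by [clique_all_colors_card] some colour is missing. *)
Definition miss g : 'I_n.+1 := odflt ord0 [pick i | ~~ clique_has c g i].

Lemma miss_avoids g w : edge_clique g w -> c w != miss g.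
Proof.
move=> Qw; have: ~~ clique_has c g (miss g).
  rewrite /miss; case: pickP => //= all_i.
  have := @clique_all_colors_card _ _ c_loc g (fun i => negbFE (all_i i)).
  by rewrite ltnn.
by apply: contra => cw; apply/existsP; exists w; rewrite Qw.
Qed.

Lemma copy_color_miss g i : i != miss g -> exists j, c (inr (g, j)) = i.
Proof.
move=> i_miss; have [/existsP[j /eqP]|no_j] := boolP [exists j, c (inr (g, j)) == i].
  by exists j.
pose copy j := c (inr (g, j)).
have : #|codom copy| <= #|~: [set i; miss g]|.
  apply/subset_leq_card/subsetP => _ /codomP[j ->]; rewrite !inE negb_or.
  rewrite miss_avoids /= ?eqxx // andbT; apply: contra no_j => /eqP cj.
  by apply/existsP; exists j; apply/eqP.
rewrite card_codom; last exact: copy_color_inj.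
by move: (cardsC [set i; miss g]); rewrite cards2 i_miss !card_ord; lia.
Qed.

Lemma copy_code_other g j i : i != c (inr (g, j)) -> i != miss g ->
  rainbow_code adj c (inr (g, j)) i = Some 1.
Proof.
move=> i_cj i_miss; have [j' cj'] := copy_color_miss i_miss.
rewrite ffunE (dist_set_adj card_corona_gt1 (w := inr (g, j'))) ?inE ?cj' 1?eq_sym //=.
by rewrite eqxx; apply: contraNneq i_cj => ->; rewrite cj'.
Qed.

Definition sees (z : 'I_n.+1) (u : 'I_m) : bool := [exists w, adj (inl u) w && (c w == z)].

Lemma dist_copy_miss g j u z : miss g = z -> incident u g -> sees z u ->
  dist_set adj (inr (g, j)) (color_class c z) = Some 2.
Proof.
move=> <- ug /existsP[w /andP[uw /eqP cw]].
apply: (dist_set_via card_corona_gt2 (t := inl u) (w := w)) => //; rewrite ?inE ?cw //.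
- by rewrite miss_avoids //= eqxx.
- move=> x; rewrite inE; apply: contraTN => gx; apply: miss_avoids.
  by rewrite -(copy_closed_nbhd g j) gx orbT.
Qed.

(* Two copies missing the same colour [z] can only be told apart by their distance to [z]. *)
Lemma same_miss_dist g g' z : g != g' -> miss g = z -> miss g' = z ->
  ~ (forall j j', dist_set adj (inr (g, j)) (color_class c z) =
                  dist_set adj (inr (g', j')) (color_class c z)).
Proof.
move=> gg' gz g'z dists.
pose j := Ordinal n_gt0; pose x := c (inr (g, j)).
have [|j' cj'] := @copy_color_miss g' x; first by rewrite g'z -gz miss_avoids //= eqxx.
suff: inr (g, j) = inr (g', j') :> V by case=> /eqP; rewrite (negbTE gg').
have [_ code_inj] := c_loc; apply: code_inj; apply/ffunP => i.
have [->|ix] := eqVneq i x; first by rewrite !ffunE !dist_set_mem ?inE ?cj'.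
have [->|iz] := eqVneq i z; first by rewrite !ffunE (dists j j').
by rewrite !copy_code_other ?gz ?g'z ?cj'.
Qed.

Lemma blind_miss v z h : ~~ sees z v -> incident v h -> miss h = z.
Proof.
move=> v_blind vh; apply/eqP; apply: contraNT v_blind; rewrite eq_sym => /copy_color_miss[j cj].
by apply/existsP; exists (inr (h, j)); rewrite cj eqxx andbT.
Qed.

(* The two edges joining [v] to the ends of [s] both miss [z] and both have an end seeing [z]. *)
Lemma blind_copy_color v z s j0 : ~~ sees z v -> c (inr (s, j0)) != z.
Proof.
move=> v_blind; apply/eqP => cs.
have sees_s u : incident u s -> sees z u.
  by move=> us; apply/existsP; exists (inr (s, j0)); rewrite cs eqxx andbT.
have v1 : v != e1 s by apply: contraNneq v_blind => ->; rewrite sees_s ?incident_e1.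
have v2 : v != e2 s by apply: contraNneq v_blind => ->; rewrite sees_s ?incident_e2.
have [h1 /andP[vh1 h1s]] := incident_edge v1.
have [h2 /andP[vh2 h2s]] := incident_edge v2.
have h12 : h1 != h2.
  by apply/eqP => h12; subst h2; exact: incident3 vh1 h1s h2s v1 v2 (e1_neq_e2 s).
have [h1z h2z] := (blind_miss v_blind vh1, blind_miss v_blind vh2).
apply: (same_miss_dist h12 h1z h2z) => j j'.
rewrite (dist_copy_miss j h1z h1s (sees_s _ (incident_e1 s))).
by rewrite (dist_copy_miss j' h2z h2s (sees_s _ (incident_e2 s))).
Qed.

Lemma locating_tight_card_edges : #|{: KEdge m}| <= n.+1.
Proof.
rewrite leqNgt; apply/negP => edges_gt.
have [g [g' gg' same]] : exists g, exists2 g', g != g' & miss g = miss g'.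
  apply/injectivePn; apply: contraL edges_gt => /injectiveP/leq_card.
  by rewrite card_ord leqNgt.
move: same; set z := miss g => /esym g'z; have gz : miss g = z by [].
have [class0|[w0]] := set_0Vmem (color_class c z).
  by apply: (same_miss_dist gg' gz g'z) => j j'; rewrite !dist_set_none.
rewrite inE => /eqP cw0.
have [all_see|] := boolP [forall u, (c (inl u) != z) ==> sees z u].
  have e1_sees h : miss h = z -> sees z (e1 h).
    by move=> hz; apply: (implyP (forallP all_see _)); rewrite -hz miss_avoids //= incident_e1.
  apply: (same_miss_dist gg' gz g'z) => j j'.
  by rewrite (dist_copy_miss j gz (incident_e1 g)) ?(dist_copy_miss j' g'z (incident_e1 g')) ?e1_sees.
case/forallPn=> v; rewrite negb_imply => /andP[cv v_blind].
case: w0 cw0 => [a|[s j0]] cw0; last by move: (blind_copy_color s j0 v_blind); rewrite cw0 eqxx.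
case/negP: v_blind; apply/existsP; exists (inl a); rewrite cw0 eqxx andbT /=.
by apply: contraNneq cv => ->; rewrite cw0.
Qed.

End TightColoring.
End Corona.

Definition skip (h j : nat) : nat := if j < h then j else j.+1.
Definition unskip (h z : nat) : nat := if z < h then z else z.-1.

Lemma skip_inj h : injective (skip h).
Proof. by move=> i j; rewrite /skip; do 2 case: ifP; lia. Qed.

Lemma skip_neq h j : skip h j != h.
Proof. by rewrite /skip; case: ifP; lia. Qed.

Lemma unskipK h z : z != h -> skip h (unskip h z) = z.
Proof. by rewrite /skip /unskip; do 2 case: ifP; lia. Qed.

(* [a |-> {sx a, sy a}] maps each vertex of K_(p+1) injectively to an edge avoiding it:
   0 |-> {1, 2}, 1 |-> {0, p} and a |-> {0, a - 1} for a >= 2. *)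
Definition sx (a : nat) : nat := if a == 0 then 1 else 0.
Definition sy (p a : nat) : nat := if a == 0 then 2 else if a == 1 then p else a.-1.

Lemma sxy_spec p a b : 1 < p -> a <= p -> b <= p ->
  [/\ sx a < sy p a <= p, a != sx a, a != sy p a &
      sx a = sx b -> sy p a = sy p b -> a = b].
Proof.
rewrite /sx /sy => p_gt1 ap bp.
by case: (eqVneq a 0); case: (eqVneq a 1); case: (eqVneq b 0); case: (eqVneq b 1);
  split; lia.
Qed.

Lemma avoiding_edges p : 1 < p ->
  exists avoid : 'I_p.+1 -> KEdge p.+1, injective avoid /\ forall a, ~~ incident a (avoid a).
Proof.
move=> p_gt1; have m_gt2 : 2 < p.+1 by [].
pose avoid (a : 'I_p.+1) : KEdge p.+1 := insubd (edge01 m_gt2) (inord (sx a), inord (sy p a)).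
have avoidE a : e1 (avoid a) = sx a :> nat /\ e2 (avoid a) = sy p a :> nat.
  have [/andP[sxy syp] _ _ _] := sxy_spec p_gt1 (ltn_ord a) (ltn_ord a).
  by rewrite /avoid insubdK /= ?inordK //; [lia | rewrite unfold_in /= !inordK //; lia].
exists avoid; split.
  move=> a b ab; have [_ _ _ sxy_inj] := sxy_spec p_gt1 (ltn_ord a) (ltn_ord b).
  apply/val_inj/sxy_inj; first by rewrite -(avoidE a).1 -(avoidE b).1 ab.
  by rewrite -(avoidE a).2 -(avoidE b).2 ab.
move=> a; have [_ a_sx a_sy _] := sxy_spec p_gt1 (ltn_ord a) (ltn_ord a).
rewrite /incident negb_or; apply/andP; split; apply/eqP => /(congr1 (@nat_of_ord _)).
  by rewrite (avoidE a).1; apply/eqP.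
by rewrite (avoidE a).2; apply/eqP.
Qed.

(* Each edge gets its own colour, missing from its copy; each vertex gets the colour of an
   edge avoiding it. *)
Lemma corona_locating_few_edges p n : 1 < p -> #|{: KEdge p.+1}| <= n.+1 ->
  exists c : corona_vertex p.+1 n -> 'I_n.+1, locating_rainbow_coloring (@corona_adj p.+1 n) c.
Proof.
move=> p_gt1 edges_le; have m_gt2 : 2 < p.+1 by [].
have [avoid [avoid_inj avoid_not_incident]] := avoiding_edges p_gt1.
pose rk (g : KEdge p.+1) : nat := enum_rank g.
have rk_le g : rk g <= n by rewrite -ltnS (leq_trans (ltn_ord _) edges_le).
have rk_inj g g' : rk g = rk g' -> g = g' by move=> /val_inj /enum_rank_inj.
pose col (x : corona_vertex p.+1 n) : nat :=
  if x is inr (g, j) then skip (rk g) j else rk (avoid (if x is inl a then a else ord0)).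
have unskip_lt g z : z <= n -> z != rk g -> unskip (rk g) z < n.
  by move=> zn zg; move: (rk_le g); rewrite /unskip; case: ifP; lia.
have clique_avoids g : ~~ clique_has col g (rk g).
  apply: clique_hasN => [||j] /=; last exact: skip_neq.
  + by apply: contra (avoid_not_incident (e1 g)) => /eqP /rk_inj ->; exact: incident_e1.
  + by apply: contra (avoid_not_incident (e2 g)) => /eqP /rk_inj ->; exact: incident_e2.
exists (fun x => inord (col x)); apply: locating_criterion => //.
- by case=> [a|[g j]] /=; [exact: rk_le | move: (rk_le g) (ltn_ord j); rewrite /skip; case: ifP; lia].
- by move=> a b /rk_inj /avoid_inj.
- by move=> g i j /skip_inj /val_inj.
- move=> g g' gg'; have g'g : rk g' != rk g by apply: contraNneq gg' => /rk_inj ->.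
  by exists (Ordinal (unskip_lt g _ (rk_le g') g'g)); rewrite /= unskipK.
move=> g; exists (rk g); split => // v.
have [h1 [h2 [vh1 vh2 h12]]] := incident_two_edges m_gt2 v.
have [h [vh hg]] : exists h, incident v h /\ rk g != rk h.
  have [h1g|] := eqVneq (rk g) (rk h1); last by exists h1.
  by exists h2; split => //; rewrite h1g; apply: contra h12 => /eqP /rk_inj ->.
apply/existsP; exists (inr (h, Ordinal (unskip_lt h _ (rk_le g) hg))).
by rewrite /= unskipK // eqxx andbT; exact: vh.
Qed.

Definition skip2 (x y j : nat) : nat := skip (maxn x y) (skip (minn x y) j).
Definition unskip2 (x y z : nat) : nat := unskip (minn x y) (unskip (maxn x y) z).

Lemma skip2_inj x y : injective (skip2 x y).
Proof. by move=> i j /skip_inj /skip_inj. Qed.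

Lemma skip2_neq x y j : x != y -> (skip2 x y j != x) && (skip2 x y j != y).
Proof. by rewrite /skip2 /skip; do 2 case: ifP; lia. Qed.

Lemma skip2K x y z : x != y -> z != x -> z != y -> skip2 x y (unskip2 x y z) = z.
Proof. by rewrite /skip2 /unskip2 /skip /unskip; repeat case: ifP; lia. Qed.

Lemma unskip2_lt x y z k : x <= k.+1 -> y <= k.+1 -> x != y -> z != x -> z != y ->
  z <= k.+1 -> unskip2 x y z < k.
Proof. by rewrite /unskip2 /unskip; repeat case: ifP; lia. Qed.

(* The edge {a, b} is sent to its rotation by 2 if a and b are cyclically adjacent and by 1
   otherwise: this avoids {a, b}, and the rotation amount is read off the cyclic distance. *)
Definition cyclic_adjacent m a b := (b == a.+1) || ((a == 0) && (b == m.-1)).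
Definition rotate m s x := if x + s < m then x + s else x + s - m.
Definition shift m a b := if cyclic_adjacent m a b then 2 else 1.
Definition rot1 m a b := rotate m (shift m a b) a.
Definition rot2 m a b := rotate m (shift m a b) b.

Lemma rot_spec m a b : 3 < m -> a < b -> b < m ->
  [/\ rot1 m a b < m, rot2 m a b < m, rot1 m a b != rot2 m a b,
      (rot1 m a b != a) && (rot1 m a b != b) & (rot2 m a b != a) && (rot2 m a b != b)].
Proof.
rewrite /rot1 /rot2 /shift /rotate => m_gt3 ab bm.
case adj_ab: (cyclic_adjacent m a b); move: adj_ab; rewrite /cyclic_adjacent => adj_ab.
  by repeat case: ifP; split; lia.
by repeat case: ifP; split; lia.
Qed.

Lemma rot_inj m a b a' b' : 3 < m -> a < b -> b < m -> a' < b' -> b' < m ->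
  (rot1 m a' b' == rot1 m a b) || (rot1 m a' b' == rot2 m a b) ->
  (rot2 m a' b' == rot1 m a b) || (rot2 m a' b' == rot2 m a b) -> (a == a') && (b == b').
Proof.
rewrite /rot1 /rot2 /shift /rotate => m_gt3 ab bm ab' bm'.
case adj_ab: (cyclic_adjacent m a b); case adj_ab': (cyclic_adjacent m a' b');
  move: adj_ab adj_ab'; rewrite /cyclic_adjacent => adj_ab adj_ab'.
all: by repeat case: ifP; lia.
Qed.

Lemma disjoint_edge_pairs p : 3 < p.+1 ->
  exists P Q : KEdge p.+1 -> nat,
    (forall g, [/\ P g < p.+1, Q g < p.+1, P g != Q g,
                   (P g != e1 g) && (P g != e2 g) & (Q g != e1 g) && (Q g != e2 g)]) /\
    (forall g g', g != g' ->
       exists2 z, (z == P g') || (z == Q g') & (z != P g) && (z != Q g)).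
Proof.
move=> m_gt3.
exists (fun g : KEdge p.+1 => rot1 p.+1 (e1 g) (e2 g)), (fun g : KEdge p.+1 => rot2 p.+1 (e1 g) (e2 g)).
split=> [g|g g' gg']; first exact: rot_spec m_gt3 (valP g) (ltn_ord (e2 g)).
case: (boolP ((rot1 p.+1 (e1 g') (e2 g') == rot1 p.+1 (e1 g) (e2 g)) ||
              (rot1 p.+1 (e1 g') (e2 g') == rot2 p.+1 (e1 g) (e2 g)))) => [PP|]; last first.
  by rewrite negb_or => PP; exists (rot1 p.+1 (e1 g') (e2 g')); rewrite ?eqxx.
case: (boolP ((rot2 p.+1 (e1 g') (e2 g') == rot1 p.+1 (e1 g) (e2 g)) ||
              (rot2 p.+1 (e1 g') (e2 g') == rot2 p.+1 (e1 g) (e2 g)))) => [QQ|]; last first.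
  by rewrite negb_or => QQ; exists (rot2 p.+1 (e1 g') (e2 g')); rewrite ?eqxx ?orbT.
case/negP: gg'; apply/eqP/val_inj.
have := rot_inj m_gt3 (valP g) (ltn_ord _) (valP g') (ltn_ord _) PP QQ.
case/andP=> /eqP/val_inj e1E /eqP/val_inj e2E.
by case: (val g) (val g') e1E e2E => [? ?] [? ?] /= -> ->.
Qed.

(* Vertex [a] gets colour [a]; the copy on [g] gets all colours but [P g] and [Q g]. *)
Lemma corona_locating_many_edges p n : 3 < p.+1 -> p.+1 <= n ->
  exists c : corona_vertex p.+1 n -> 'I_n.+2, locating_rainbow_coloring (@corona_adj p.+1 n) c.
Proof.
move=> m_gt3 mn; have [P [Q [PQ PQ_sep]]] := disjoint_edge_pairs m_gt3.
pose col (x : corona_vertex p.+1 n) : nat :=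
  if x is inr (g, j) then skip2 (P g) (Q g) j else (if x is inl a then a else 0).
have clique_avoids g z : (z == P g) || (z == Q g) -> ~~ clique_has col g z.
  have [_ _ PQg /andP[P1 P2] /andP[Q1 Q2]] := PQ g.
  move=> zPQ; apply: clique_hasN => /=; try by move: zPQ P1 P2 Q1 Q2 => /=; lia.
  by move=> j; move: zPQ (skip2_neq j PQg) => /=; lia.
exists (fun x => inord (col x)); apply: (locating_criterion (ltnW m_gt3)) => //.
- case=> [a|[g j]] /=; first by move: (ltn_ord a); lia.
  have [_ _ PQg _ _] := PQ g.
  by move: (ltn_ord j) (skip2_neq j PQg); rewrite /skip2 /skip; do 2 case: ifP; lia.
- by move=> a b /val_inj.
- by move=> g i j /skip2_inj /val_inj.
- move=> g g' /PQ_sep[z zPQ /andP[zP zQ]].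
  have [P_lt Q_lt PQg _ _] := PQ g; have [P'_lt Q'_lt _ _ _] := PQ g'.
  have j_lt : unskip2 (P g) (Q g) z < n by apply: unskip2_lt => //; move: zPQ; lia.
  by exists (Ordinal j_lt); rewrite /= skip2K // clique_avoids.
move=> g; exists (P g); split; first by rewrite clique_avoids ?eqxx.
have [P_lt _ _ _ _] := PQ g.
move=> v; apply/existsP; exists (inl (inord (P g))); rewrite /= inordK // eqxx andbT.
by case: (eqVneq (inl (inord (P g))) (inl v)) => //= Pv; rewrite eq_sym.
Qed.

Lemma sum_ltn m j : \sum_(i < m) (i < j) = minn m j.
Proof.
elim: m => [|m IHm]; first by rewrite big_ord0 min0n.
by rewrite big_ord_recr /= IHm; case: (ltnP m j); lia.
Qed.

Lemma card_KEdge m : #|{: KEdge m}| = 'C(m, 2).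
Proof.
rewrite card_sig -sum1_card big_mkcond /=.
rewrite -(pair_bigA _ (fun i j : 'I_m => if i < j then 1 else 0)) exchange_big /=.
rewrite -bin2_sum big_mkord; apply: eq_bigr => j _.
by rewrite -[LHS]/(\sum_(i < m) (i < j : nat)) sum_ltn; apply/minn_idPr/ltnW.
Qed.

Theorem theorem9 (m n : nat) :
  3 <= m -> 2 <= n -> m <= n ->
  (m * (m - 1) %/ 2 - 1 <= n -> rvcl_eq (@corona_adj m n) n.+1) /\
  (n < m * (m - 1) %/ 2 - 1 -> rvcl_eq (@corona_adj m n) n.+2).
Proof.
move=> m_gt2 n_gt1 mn.
have card_edges : #|{: KEdge m}| = m * (m - 1) %/ 2 by rewrite card_KEdge bin2 divn2 subn1.
have no_small k : k <= n -> ~ exists c : corona_vertex m n -> 'I_k,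
    locating_rainbow_coloring (@corona_adj m n) c.
  by move=> kn [c c_loc]; have := locating_colors_gt m_gt2 c_loc; rewrite ltnNge kn.
case: m m_gt2 mn no_small card_edges => [//|p] m_gt2 mn no_small card_edges.
split=> edges; split=> [|k k_lt].
- by apply: corona_locating_few_edges => //; lia.
- by apply: no_small; lia.
- apply: corona_locating_many_edges => //.
  by case: (ltngtP 3 p.+1) m_gt2 edges => // <-; lia.
have [k_le|k_eq] := leqP k n; first exact: no_small.
have -> : k = n.+1 by lia.
by move=> [c c_loc]; have := locating_tight_card_edges m_gt2 (ltnW n_gt1) c_loc; lia.
Qed.
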